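(* Consider $\bar{\mathbb R}_+=[0,\infty]$ as a general metric space with distance $(x,y)\mapsto[x,y]$, and for a filter $\mathcal F$ on it put $\liminf(\mathcal F)=\sup_{f\in\mathcal F}\inf f$. Then: (a) a filter $\mathcal F$ on $[0,\infty]$ is weakly flat if and only if either $\liminf(\mathcal F)<\infty$ or $\mathcal F$ is the principal filter $\{f:\infty\in f\}$; (b) every weakly flat filter on $[0,\infty]$ is flat; (c) for weakly flat filters $\mathcal F_1,\mathcal F_2$ on $[0,\infty]$, $\sup_{x}[M^-(\mathcal F_1)(x),M^-(\mathcal F_2)(x)]=[\liminf(\mathcal F_1),\liminf(\mathcal F_2)]$. Consequently the $\mathcal P_1$- and $\mathcal P_2$-completions of $\bar{\mathbb R}_+$ are both isomorphic to $\bar{\mathbb R}_+$.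
   Context: $[x,y]=\max(y-x,0)$ for finite $x,y$, $[x,\infty]=\infty$ for $x<\infty$, $[\infty,y]=0$. A filter on a set is a nonempty set of nonempty subsets closed under finite intersections and supersets. For a general metric space $A$ (here $A(x,y)=[x,y]$), $M^-(\mathcal F)(x)=\sup_{f\in\mathcal F}\inf_{y\in f}A(x,y)$; $\mathcal F$ is weakly flat iff for every $\epsilon>0$ there is $f\in\mathcal F$ such that for all $x\in f$ and $g\in\mathcal F$ there is $y\in g$ with $A(x,y)\le\epsilon$; flat iff the same holds for every finite family $x_1,\dots,x_n\in f$ with a common $y\in g$. The $\mathcal P_1$-completion (resp. $\mathcal P_2$-completion) of $A$ is the general metric space of closed weakly flat (resp. closed flat) filters with distance $\sup_x[M^-(\mathcal F_1)(x),M^-(\mathcal F_2)(x)]$, where a weakly flat $\mathcal F$ is closed iff every $f\in\mathcal F$ contains some $\{x:M^-(\mathcal F)(x)\le\epsilon\}$, $\epsilon>0$. *)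

From HB Require Import structures.
From mathcomp Require Import all_boot all_order all_algebra.
From mathcomp Require Import all_classical all_reals.
From mathcomp Require Import ereal.
Set Implicit Arguments. Unset Strict Implicit. Unset Printing Implicit Defensive.
Import Order.TTheory GRing.Theory Num.Theory.
Local Open Scope classical_set_scope.
Local Open Scope ereal_scope.

Section Defs.
Variable R : realType.

Definition edist (x y : \bar R) : \bar R :=
  if x == +oo then 0 else if y == +oo then +oo else Order.max (y - x) 0.

Definition ERp := {x : \bar R | 0 <= x}.

Definition ERp_oo : ERp := exist _ +oo (@le0y R).

Definition dERp (x y : ERp) : \bar R := edist (proj1_sig x) (proj1_sig y).

Variable T : Type.

Definition is_filter (F : set (set T)) : Prop :=
  [/\ F !=set0,
      (forall f, F f -> f !=set0),
      (forall f g, F f -> F g -> F (f `&` g)) &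
      (forall f g, F f -> f `<=` g -> F g)].

Definition Mminus (A : T -> T -> \bar R) (F : set (set T)) (x : T) : \bar R :=
  ereal_sup [set ereal_inf [set A x y | y in f] | f in F].

Definition weakly_flat (A : T -> T -> \bar R) (F : set (set T)) : Prop :=
  forall eps : R, (0 < eps)%R ->
    exists2 f, F f &
      forall x, f x -> forall g, F g -> exists2 y, g y & A x y <= eps%:E.

Definition flat (A : T -> T -> \bar R) (F : set (set T)) : Prop :=
  forall eps : R, (0 < eps)%R ->
    exists2 f, F f &
      forall (n : nat) (xs : 'I_n -> T), (forall i, f (xs i)) ->
        forall g, F g -> exists2 y, g y & forall i, A (xs i) y <= eps%:E.

Definition closed_filter (A : T -> T -> \bar R) (F : set (set T)) : Prop :=
  forall f, F f -> exists2 eps : R, (0 < eps)%R &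
    [set x | Mminus A F x <= eps%:E] `<=` f.

Definition filter_dist (A : T -> T -> \bar R) (F1 F2 : set (set T)) : \bar R :=
  ereal_sup [set edist (Mminus A F1 x) (Mminus A F2 x) | x in [set: T]].

Definition P1_point (A : T -> T -> \bar R) (F : set (set T)) : Prop :=
  [/\ is_filter F, weakly_flat A F & closed_filter A F].

Definition P2_point (A : T -> T -> \bar R) (F : set (set T)) : Prop :=
  [/\ is_filter F, flat A F & closed_filter A F].

Definition iso_to_completion (A : T -> T -> \bar R)
    (P : set (set T) -> Prop) : Prop :=
  exists phi : T -> set (set T),
    [/\ (forall x, P (phi x)),
        (forall F, P F -> exists! x, phi x = F) &
        (forall x y, filter_dist A (phi x) (phi y) = A x y)].

End Defs.

Definition liminfF (R : realType) (F : set (set (ERp R))) : \bar R :=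
  ereal_sup [set ereal_inf [set proj1_sig x | x in f] | f in F].

From HB Require Import structures.
From mathcomp Require Import all_boot all_order all_algebra.
From mathcomp Require Import all_classical all_reals.
From mathcomp Require Import ereal.
From mathcomp Require Import lra.
Set Implicit Arguments. Unset Strict Implicit. Unset Printing Implicit Defensive.
Import Order.TTheory GRing.Theory Num.Theory.
Local Open Scope classical_set_scope.
Local Open Scope ereal_scope.

(* For y in [0,oo], the map t |-> [y, t] is monotone and commutes with infima
   and suprema of nonempty sets, so M^-(F)(y) = [y, liminf F] for every filter F.
   Hence everything is governed by liminf F: the distance between two filters
   is the sup over y of [[y, a], [y, b]], which is [a, b] (attained at y = 0),
   and F is flat as soon as liminf F is finite, because one set of F has its
   infimum within eps of liminf F while every set of F has infimum at most
   liminf F.  If liminf F = oo, weak flatness forces some f in F to be {oo},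
   so F is principal at oo.  The completions are then parametrised by
   x |-> the filter generated by the sets [x - eps, oo]. *)

Section FlatWeaklyFlat.
Variables (R : realType) (T : Type) (A : T -> T -> \bar R).

Lemma flat_weakly_flat (F : set (set T)) : flat A F -> weakly_flat A F.
Proof.
move=> Fflat e e0; have [f Ff fP] := Fflat e e0; exists f => // x fx g Fg.
have [y gy yP] := fP 1%N (fun _ => x) (fun _ => fx) g Fg.
by exists y => //; apply: (yP ord0).
Qed.

Lemma P2_point_P1_point (F : set (set T)) : P2_point A F -> P1_point A F.
Proof. by case=> Ff /flat_weakly_flat. Qed.

End FlatWeaklyFlat.

Section ExtendedDistance.
Variable R : realType.
Implicit Types (r : R) (t u : \bar R).

Lemma edist_fin r t : edist r%:E t = maxe (t - r%:E) 0.
Proof. by rewrite /edist /=; case: (eqVneq t +oo) => [->|]. Qed.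

Lemma edist_oo t : edist +oo t = 0.
Proof. by rewrite /edist eqxx. Qed.

Lemma edist_finoo r : edist r%:E +oo = +oo.
Proof. by []. Qed.

Lemma edist0 t : 0 <= t -> edist 0 t = t.
Proof. by case: t => [s| |] t0 //; rewrite edist_fin sube0 max_l. Qed.

Lemma edist_ge0 t u : 0 <= edist t u.
Proof.
rewrite /edist; case: ifP => // _; case: ifP => // _.
by rewrite le_max lexx orbT.
Qed.

Lemma edist_le t u (e : R) : 0 <= t -> (0 < e)%R ->
  (edist t u <= e%:E) = (u <= t + e%:E).
Proof.
move=> t0 e0; case: t t0 => [r| |] t0 //.
- by rewrite edist_fin ge_max lee_fin (ltW e0) andbT leeBlDr // addeC.
- by rewrite edist_oo lee_fin (ltW e0) leey.
Qed.

Lemma ereal_inf_edist t (S : set \bar R) : 0 <= t -> S !=set0 ->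
  ereal_inf (edist t @` S) = edist t (ereal_inf S).
Proof.
move=> t0 [u0 Su0]; case: t t0 => [r| |] t0 //; last first.
  rewrite edist_oo -(ereal_inf1 0); congr ereal_inf.
  by apply/seteqP; split => [_ [v _ <-]|_ ->]; [rewrite edist_oo|exists u0].
apply/eqP; rewrite eq_le; apply/andP; split; last first.
  apply: le_ereal_inf_tmp => _ [v Sv <-].
  rewrite !edist_fin ge_max !le_max lexx !orbT andbT leeD2r //.
  exact: ereal_inf_lbound.
set I := ereal_inf (edist _ @` S); rewrite edist_fin le_max.
have [I0|I0] := leP I 0; first by rewrite orbT.
rewrite leeBrDr //; apply/orP; left; apply: le_ereal_inf_tmp => v Sv.
have : I <= edist r%:E v by apply: ereal_inf_lbound; exists v.
rewrite edist_fin le_max => /orP[|]; first by rewrite leeBrDr.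
by move=> /(lt_le_trans I0); rewrite ltxx.
Qed.

Lemma ereal_sup_edist t (S : set \bar R) : 0 <= t -> S !=set0 ->
  ereal_sup (edist t @` S) = edist t (ereal_sup S).
Proof.
move=> t0 [u0 Su0]; case: t t0 => [r| |] t0 //; last first.
  rewrite edist_oo -(ereal_sup1 0); congr ereal_sup.
  by apply/seteqP; split => [_ [v _ <-]|_ ->]; [rewrite edist_oo|exists u0].
have ubP v : S v -> edist r%:E v <= ereal_sup (edist r%:E @` S).
  by move=> Sv; apply: ereal_sup_ubound; exists v.
apply/eqP; rewrite eq_le; apply/andP; split.
  apply: ge_ereal_sup => _ [v Sv <-].
  rewrite !edist_fin ge_max !le_max lexx !orbT andbT leeD2r //.
  exact: ereal_sup_ubound.
rewrite edist_fin ge_max (le_trans (edist_ge0 _ _) (ubP _ Su0)) andbT.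
rewrite leeBlDr //; apply: ge_ereal_sup => v Sv; rewrite -leeBlDr //.
by apply: le_trans (ubP _ Sv); rewrite edist_fin le_max lexx.
Qed.

Lemma max_sub0_lipschitz (r s u : R) :
  (Num.max (Num.max (u - r) 0 - Num.max (s - r) 0) 0 <= Num.max (u - s) 0)%R.
Proof.
rewrite ge_max; apply/andP; split; last by rewrite le_max lexx orbT.
have [] := leP (u - r)%R 0%R; have [] := leP (s - r)%R 0%R;
  have [] := leP (u - s)%R 0%R; move=> h1 h2 h3;
  rewrite ?(max_r h1, max_l (ltW h1), max_r h2, max_l (ltW h2),
            max_r h3, max_l (ltW h3)); lra.
Qed.

Lemma edist_edist_le t a b : 0 <= t -> 0 <= a -> 0 <= b ->
  edist (edist t a) (edist t b) <= edist a b.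
Proof.
case: t => [r| |] t0 a0 b0 //; last by rewrite !edist_oo edist0 ?edist_ge0.
case: a a0 => [s| |] a0 //.
case: b b0 => [u| |] b0 //; last by rewrite !edist_finoo leey.
rewrite !edist_fin -!EFinB -!EFin_max edist_fin -EFinB -EFin_max.
by rewrite lee_fin max_sub0_lipschitz.
Qed.

End ExtendedDistance.

Section Completion.
Variable R : realType.
Implicit Types (x y : ERp R) (f g : set (ERp R)) (F : set (set (ERp R))).

Local Notation dist := (@dERp R).
Local Notation einf f := (ereal_inf [set proj1_sig z | z in f]).

Lemma val_ge0 x : 0 <= proj1_sig x.
Proof. exact: proj2_sig x. Qed.

Lemma ERp_inj x y : proj1_sig x = proj1_sig y -> x = y.
Proof. exact: val_inj. Qed.

Definition ERp0 : ERp R := exist _ 0 (lexx 0).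

Lemma einf_le f x : f x -> einf f <= proj1_sig x.
Proof. by move=> fx; apply: ereal_inf_lbound; exists x. Qed.

Lemma einf_le_liminf F f : F f -> einf f <= liminfF F.
Proof. by move=> Ff; apply: ereal_sup_ubound; exists f. Qed.

Lemma liminf_ge0 F : is_filter F -> 0 <= liminfF F.
Proof.
move=> [[f Ff] _ _ _]; apply: (le_trans _ (einf_le_liminf Ff)).
by apply: le_ereal_inf_tmp => _ [z _ <-]; apply: val_ge0.
Qed.

Lemma liminf_fin_num F : is_filter F -> liminfF F < +oo ->
  liminfF F \is a fin_num.
Proof. by move=> Ff; rewrite ge0_fin_numE ?liminf_ge0. Qed.

Lemma Mminus_dERp F y : is_filter F ->
  Mminus dist F y = edist (proj1_sig y) (liminfF F).
Proof.
move=> [[f0 Ff0] Fn0 _ _].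
rewrite /Mminus /liminfF -ereal_sup_edist ?val_ge0 //; last first.
  by exists (einf f0); exists f0.
have infE f : F f ->
    ereal_inf [set dist y z | z in f] = edist (proj1_sig y) (einf f).
  move=> Ff; have [z fz] := Fn0 f Ff.
  rewrite -ereal_inf_edist ?val_ge0 ?image_comp //.
  by exists (proj1_sig z); exists z.
rewrite image_comp; congr ereal_sup; apply/seteqP.
by split => _ [f Ff <-]; exists f => //=; rewrite infE.
Qed.

Lemma filter_dist_liminf F1 F2 : is_filter F1 -> is_filter F2 ->
  filter_dist dist F1 F2 = edist (liminfF F1) (liminfF F2).
Proof.
move=> F1f F2f; have [L1 L2] := (liminf_ge0 F1f, liminf_ge0 F2f).
apply/eqP; rewrite eq_le; apply/andP; split.
  apply: ge_ereal_sup => _ [x _ <-]; rewrite !Mminus_dERp //.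
  exact: edist_edist_le (val_ge0 x) L1 L2.
apply: ereal_sup_ubound; exists ERp0 => //.
by rewrite !Mminus_dERp //= !edist0.
Qed.

Definition finite_or_principal_oo F :=
  liminfF F < +oo \/ F = [set f | f (ERp_oo R)].

Lemma finite_liminf_flat F : is_filter F -> liminfF F < +oo -> flat dist F.
Proof.
move=> Ff Lfin e e0.
have : liminfF F - e%:E < liminfF F.
  by rewrite gte_subl ?liminf_fin_num.
case/ereal_sup_gt => _ [f Ff' <-] fL; exists f => // n xs fxs g Fg.
have : einf g < einf f + e%:E.
  by apply: le_lt_trans (einf_le_liminf Fg) _; rewrite -lteBlDr.
case/ereal_inf_lt => _ [y gy <-] yP; exists y => // i.
rewrite /dERp edist_le ?val_ge0 //.
by apply/ltW/(lt_le_trans yP); rewrite leeD2r // einf_le.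
Qed.

Lemma principal_oo_flat : flat dist [set f | f (ERp_oo R)].
Proof.
move=> e e0; exists [set ERp_oo R] => //= n xs xsP g goo.
by exists (ERp_oo R) => // i; rewrite xsP /dERp edist_oo lee_fin ltW.
Qed.

Lemma finite_or_principal_oo_flat F : is_filter F ->
  finite_or_principal_oo F -> flat dist F.
Proof.
by move=> Ff [Lfin|->]; [apply: finite_liminf_flat|apply: principal_oo_flat].
Qed.

Lemma weakly_flat_finite_or_principal_oo F : is_filter F ->
  weakly_flat dist F -> finite_or_principal_oo F.
Proof.
move=> [_ Fn0 FI FS] wflat.
have [Lfin|Loo] := ltP (liminfF F) +oo; [by left|right].
have [f Ff fP] := wflat 1%R ltr01.
have fE x : f x -> x = ERp_oo R.
  move=> fx; apply: ERp_inj; case: x fx => -[r| |] x0 //= fx.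
  have /ereal_sup_gt[_ [g Fg <-] gL] := lt_le_trans (ltry (r + 1)%R) Loo.
  have [y gy] := fP _ fx g Fg; rewrite /dERp /= edist_le ?ltr01 // => yP.
  by have := lt_le_trans gL (le_trans (einf_le gy) yP); rewrite ltxx.
apply/seteqP; split => g /=.
  by move=> Fg; have [z [fz gz]] := Fn0 _ (FI _ _ Ff Fg); rewrite -(fE z fz).
by move=> goo; apply: FS Ff _ => z /fE ->.
Qed.

Lemma weakly_flat_flat F : is_filter F -> weakly_flat dist F -> flat dist F.
Proof.
move=> Ff /(weakly_flat_finite_or_principal_oo Ff).
exact: finite_or_principal_oo_flat.
Qed.

Definition upfilter x : set (set (ERp R)) :=
  [set f | exists2 e : R, (0 < e)%R &
     forall y, proj1_sig x <= proj1_sig y + e%:E -> f y].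

Lemma upfilter_oo x f : upfilter x f -> f (ERp_oo R).
Proof. by case=> e _; apply; rewrite leey. Qed.

Lemma upfilter_filter x : is_filter (upfilter x).
Proof.
split.
- by exists setT; exists 1%R.
- by move=> f /upfilter_oo foo; exists (ERp_oo R).
- move=> f g [e1 e1_gt0 fP] [e2 e2_gt0 gP].
  exists (Num.min e1 e2); first by rewrite lt_min e1_gt0 e2_gt0.
  move=> y yP; split; [apply: fP|apply: gP]; apply: le_trans yP _;
    by rewrite leeD2l // lee_fin ge_min lexx ?orbT.
- by move=> f g [e e0 fP] fg; exists e => // y /fP /fg.
Qed.

Lemma liminf_upfilter x : liminfF (upfilter x) = proj1_sig x.
Proof.
apply/eqP; rewrite eq_le; apply/andP; split.
  apply: ge_ereal_sup => _ [f [e e0 fP] <-]; apply/einf_le/fP.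
  by rewrite leeDl // lee_fin ltW.
apply/lee_addgt0Pr => e e0; rewrite -leeBlDr //.
pose f : set (ERp R) := [set y | proj1_sig x <= proj1_sig y + e%:E].
apply: (@le_trans _ _ (einf f)).
  by apply: le_ereal_inf_tmp => _ [y fy <-]; rewrite leeBlDr.
by apply: einf_le_liminf; exists e.
Qed.

Lemma upfilter_inj : injective upfilter.
Proof.
by move=> x y xy; apply: ERp_inj; rewrite -liminf_upfilter xy liminf_upfilter.
Qed.

Lemma upfilter_closed x : closed_filter dist (upfilter x).
Proof.
move=> f [e e0 fP]; exists e => // y /=.
rewrite Mminus_dERp; last exact: upfilter_filter.
by rewrite liminf_upfilter edist_le ?val_ge0 //; apply: fP.
Qed.

Lemma upfilter_oo_principal : upfilter (ERp_oo R) = [set f | f (ERp_oo R)].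
Proof.
apply/seteqP; split => f; first exact: upfilter_oo.
move=> /= foo; exists 1%R => // y yP.
suff -> : y = ERp_oo R by [].
by apply: ERp_inj; case: y yP => -[r| |].
Qed.

Lemma upfilter_flat x : flat dist (upfilter x).
Proof.
apply: finite_or_principal_oo_flat (upfilter_filter x) _.
case: x => -[r| |] x0; first by left; rewrite liminf_upfilter ltry.
  by right; rewrite -upfilter_oo_principal; congr upfilter; apply: ERp_inj.
by [].
Qed.

Lemma upfilter_P2_point x : P2_point dist (upfilter x).
Proof. by split; [apply: upfilter_filter|apply: upfilter_flat|apply: upfilter_closed]. Qed.

Definition liminf_point F (Ff : is_filter F) : ERp R :=
  exist _ (liminfF F) (liminf_ge0 Ff).

Lemma upfilter_liminf_point F (Ff : is_filter F) :
  closed_filter dist F -> liminfF F < +oo -> upfilter (liminf_point Ff) = F.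
Proof.
move=> Fcl Lfin; have [_ _ _ FS] := Ff; apply/seteqP; split => f.
  case=> e e0 fP.
  have : liminfF F - e%:E < liminfF F.
    by rewrite gte_subl ?liminf_fin_num.
  case/ereal_sup_gt => _ [g Fg <-] gL; apply: FS Fg _ => z gz.
  by apply: fP; rewrite -leeBlDr //; apply/ltW/(lt_le_trans gL)/einf_le.
move=> Ff'; have [e e0 fP] := Fcl f Ff'; exists e => // y yP.
by apply: fP; rewrite /= Mminus_dERp // edist_le ?val_ge0.
Qed.

Lemma upfilter_surj F : P1_point dist F -> exists x, upfilter x = F.
Proof.
move=> [Ff Fwflat Fcl].
case: (weakly_flat_finite_or_principal_oo Ff Fwflat) => [Lfin|->].
  by exists (liminf_point Ff); apply: upfilter_liminf_point.
by exists (ERp_oo R); apply: upfilter_oo_principal.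
Qed.

Lemma iso_to_completion_upfilter (P : set (set (ERp R)) -> Prop) :
  (forall x, P (upfilter x)) -> (forall F, P F -> P1_point dist F) ->
  iso_to_completion dist P.
Proof.
move=> Pup PP1; exists upfilter; split => //.
  move=> F /PP1 /upfilter_surj [x xF]; exists x; split => // y yF.
  by apply: upfilter_inj; rewrite xF yF.
move=> x y; rewrite filter_dist_liminf ?liminf_upfilter //; exact: upfilter_filter.
Qed.

End Completion.

Theorem mainTheorem19 (R : realType) :
  (* (a) *)
  (forall F : set (set (ERp R)), is_filter F ->
     (weakly_flat (@dERp R) F <->
        (liminfF F < +oo \/ F = [set f | f (ERp_oo R)]))) /\
  (* (b) *)
  (forall F : set (set (ERp R)), is_filter F ->
     weakly_flat (@dERp R) F -> flat (@dERp R) F) /\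
  (* (c) *)
  (forall F1 F2 : set (set (ERp R)), is_filter F1 -> is_filter F2 ->
     weakly_flat (@dERp R) F1 -> weakly_flat (@dERp R) F2 ->
     filter_dist (@dERp R) F1 F2 = edist (liminfF F1) (liminfF F2)) /\
  (* consequence: P1- and P2-completions are isomorphic to [0,oo] *)
  iso_to_completion (@dERp R) (P1_point (@dERp R)) /\
  iso_to_completion (@dERp R) (P2_point (@dERp R)).
Proof.
split; [|split; [exact: weakly_flat_flat|split]].
- move=> F Ff; split; first exact: weakly_flat_finite_or_principal_oo.
  by move/(finite_or_principal_oo_flat Ff)/flat_weakly_flat.
- by move=> F1 F2 F1f F2f _ _; apply: filter_dist_liminf.
split; last first.
  apply: iso_to_completion_upfilter; first exact: upfilter_P2_point.
  exact: P2_point_P1_point.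
apply: iso_to_completion_upfilter => // x.
exact/P2_point_P1_point/upfilter_P2_point.
Qed.
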